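(* For all $p,q\in\mathbb Z$, $r,s\ge0$ and $2\le n\le\infty$, the $n$-multicomplex $\mathcal ZW^n_s(p,q)$ is cofibrant in the $r$-model structure on $\mathrm{Ch}_n$; that is, for every morphism $f\colon A\to B$ of $n$-multicomplexes that is an $E_r$-quasi-isomorphism with $E_i(f)$ bidegree-wise surjective for all $0\le i\le r$, every morphism $\mathcal ZW^n_s(p,q)\to B$ lifts through $f$.
   Context: $R$ is a commutative unital ring. For $1\le n\le\infty$, an $n$-multicomplex is a $\mathbb Z\times\mathbb Z$-bigraded $R$-module $A$ with $R$-linear maps $d_i$ ($i\ge0$) of bidegree $(-i,1-i)$ such that $\sum_{i+j=l}(-1)^id_id_j=0$ for all $l\ge0$ and $d_i=0$ for $i\ge n$; morphisms are bidegree $(0,0)$ maps commuting with all $d_i$; category $\mathrm{Ch}_n$. Spectral sequence: $Z_0^{p,q}(A)=A^{p,q}$; for $r\ge1$, $Z_r^{p,q}(A)$ is the set of $a_0\in A^{p,q}$ for which there exist $a_j\in A^{p-j,q-j}$ ($1\le j\le r-1$) with $\sum_{i+j=l}(-1)^id_ia_j=0$ for $0\le l\le r-1$. $B_0=0$, $B_1^{p,q}(A)=A^{p,q}\cap\operatorname{im}d_0$, and for $r\ge2$, $B_r^{p,q}(A)$ is the set of $x\in A^{p,q}$ for which there exist $b_i\in A^{p+r-1-i,q+r-2-i}$ ($0\le i\le r-1$) with $x=\sum_{i=0}^{r-1}(-1)^id_ib_{r-1-i}$ and $\sum_{i=0}^l(-1)^id_ib_{l-i}=0$ for $0\le l\le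 r-2$. $E_r^{p,q}(A)=Z_r^{p,q}(A)/B_r^{p,q}(A)$, the spectral sequence of the column-filtered total complex; $f$ is an $E_r$-quasi-isomorphism if $E_{r+1}(f)$ is an isomorphism. The $r$-model structure on $\mathrm{Ch}_n$ ($2\le n\le\infty$) has weak equivalences the $E_r$-quasi-isomorphisms and fibrations the morphisms $f$ with $E_i(f)$ bidegree-wise surjective for $0\le i\le r$. $\mathbb D^n(p,q)$ is the free $n$-multicomplex on one generator in bidegree $(p,q)$. $\mathcal ZW^n_0(p,q)=\mathbb D^n(p,q)$; for $s\ge1$, $\mathcal ZW^n_s(p,q)$ is the $n$-multicomplex generated by $a_0,\dots,a_{s-1}$, $a_i$ in bidegree $(p-i,q-i)$, subject to the relations $\sum_{i+j=l}(-1)^id_ia_j=0$ for $0\le l\le s-1$ (equivalently the iterated pushout construction of the paper). *)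

From HB Require Import structures.
From mathcomp Require Import all_boot all_order all_algebra.
Unset Implicit Arguments.
Import Order.TTheory GRing.Theory Num.Theory.
Local Open Scope ring_scope.

(* n in {1,2,...} u {oo}: Some m = finite m, None = infinity.
   below n i  <->  i < n. *)
Definition below (n : option nat) (i : nat) : bool :=
  if n is Some m then (i < m)%N else true.

(* Only used where the two bidegrees are
   provably equal; it avoids dependent casts along integer identities. *)
Definition tr {R : comPzRingType} {A : int -> int -> lmodType R} {p q : int}
    (p' q' : int) (x : A p q) : A p' q' :=
  match (p, q) =P (p', q') with
  | ReflectT e => eq_rect (p, q) (fun pq => A pq.1 pq.2) x (p', q') e
  | ReflectF _ => 0
  end.

Record mcx (R : comPzRingType) (n : option nat) := Mcx {
  mc_obj :> int -> int -> lmodType R;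
  dmap : forall (i : nat) (p q : int),
      {linear mc_obj p q -> mc_obj (p - i%:Z) (q + 1 - i%:Z)};
  dmap_vanish : forall (i : nat) (p q : int) (x : mc_obj p q),
      ~~ below n i -> dmap i p q x = 0;
  dmap_rel : forall (l : nat) (p q : int) (x : mc_obj p q),
      \sum_(j < l.+1)
         (-1) ^+ (l - j)%N *:
           tr (p - l%:Z) (q + 2 - l%:Z)
              (dmap (l - j)%N (p - (j : nat)%:Z) (q + 1 - (j : nat)%:Z)
                    (dmap j p q x)) = 0
}.
Arguments dmap {R n} m i p q.

Record mcmor (R : comPzRingType) (n : option nat) (A B : mcx R n) := Mcmor {
  fmap :> forall (p q : int), {linear A p q -> B p q};
  fmap_comm : forall (i : nat) (p q : int) (x : A p q),
      fmap _ _ (dmap A i p q x) = dmap B i p q (fmap p q x)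
}.
Arguments fmap {R n A B} m p q.

Section MC.
Variables (R : comPzRingType) (n : option nat).

Definition cycrel (A : mcx R n) (s : nat) (p q : int)
    (a : forall j : nat, A (p - j%:Z) (q - j%:Z)) : Prop :=
  forall l : nat, (l < s)%N ->
    \sum_(j < l.+1)
       (-1) ^+ (l - j)%N *:
         tr (p - l%:Z) (q + 1 - l%:Z)
            (dmap A (l - j)%N (p - (j : nat)%:Z) (q - (j : nat)%:Z) (a j)) = 0.

(* Z_r^{p,q}(A): a_0 = x admits a_1..a_{r-1} satisfying the relations for
   0 <= l <= r-1 (for r = 0 this is all of A^{p,q}). *)
Definition Zr (A : mcx R n) (r : nat) (p q : int) (x : A p q) : Prop :=
  exists a : forall j : nat, A (p - j%:Z) (q - j%:Z),
    cycrel A r p q a /\ tr p q (a 0%N) = x.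

(* B_r^{p,q}(A): b_i in A^{p+r-1-i, q+r-2-i} (0 <= i <= r-1) with
   x = sum_{i=0}^{r-1} (-1)^i d_i b_{r-1-i} and
   sum_{i=0}^l (-1)^i d_i b_{l-i} = 0 for 0 <= l <= r-2.
   For r = 0 the formula gives {0}; for r = 1 it gives A^{p,q} n im d_0. *)
Definition Br (A : mcx R n) (r : nat) (p q : int) (x : A p q) : Prop :=
  exists b : forall k : nat, A (p + r%:Z - 1 - k%:Z) (q + r%:Z - 2 - k%:Z),
    x = \sum_(i < r)
          (-1) ^+ (i : nat) *:
            tr p q (dmap A i _ _ (b (r - 1 - i)%N))
    /\ forall l : nat, (l.+1 < r)%N ->
      \sum_(i < l.+1)
          (-1) ^+ (i : nat) *:
            tr (p + r%:Z - 1 - l%:Z) (q + r%:Z - 1 - l%:Z)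
               (dmap A i _ _ (b (l - i)%N)) = 0.

(* E_r(f) : Z_r/B_r -> Z_r/B_r (f preserves Z_r and B_r), unfolded:
   injective, resp. surjective, in every bidegree. *)
Definition E_inj (A B : mcx R n) (f : mcmor R n A B) (r : nat) : Prop :=
  forall (p q : int) (x : A p q),
    Zr A r p q x -> Br B r p q (f p q x) -> Br A r p q x.

Definition E_surj (A B : mcx R n) (f : mcmor R n A B) (r : nat) : Prop :=
  forall (p q : int) (y : B p q), Zr B r p q y ->
    exists x : A p q, Zr A r p q x /\ Br B r p q (f p q x - y).

Definition Er_qiso (A B : mcx R n) (f : mcmor R n A B) (r : nat) : Prop :=
  E_inj A B f r.+1 /\ E_surj A B f r.+1.

Definition r_fibration (A B : mcx R n) (f : mcmor R n A B) (r : nat) : Prop :=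
  forall i : nat, (i <= r)%N -> E_surj A B f i.

(* Morphisms ZW^n_s(p,q) -> B, by the defining presentation of ZW^n_s(p,q):
   generators a_j (0 <= j < max(s,1)) in bidegree (p-j,q-j), subject to the
   relations for 0 <= l <= s-1 (for s = 0: one free generator, i.e. D^n(p,q)).
   Such a morphism is the family g of images of the generators, subject to
   cycrel B s p q g; only the entries j < maxn s 1 are meaningful. *)
Definition ZW_hom (B : mcx R n) (s : nat) (p q : int)
    (g : forall j : nat, B (p - j%:Z) (q - j%:Z)) : Prop := cycrel B s p q g.

Definition lifts (A B : mcx R n) (f : mcmor R n A B) (s : nat) (p q : int)
    (h : forall j : nat, A (p - j%:Z) (q - j%:Z))
    (g : forall j : nat, B (p - j%:Z) (q - j%:Z)) : Prop :=
  forall j : nat, (j < maxn s 1)%N -> f _ _ (h j) = g j.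

End MC.

(* A morphism ZW_k(p, q) -> B is a family (y_j) in the columns p - j whose
   total differential vanishes in the first k columns, and such families are
   lifted through f by induction on k, starting from the surjectivity of E_0(f).
   For k <= r, E_{k+1}(f) is surjective: y_0 lifts up to a boundary, which is
   removed with a lift (by induction) of its witness; the remaining error,
   shifted by one column, is lifted by induction.
   For k > r, lift y as a k-cycle family x: the obstruction (D x)_k is an
   E_{r+1}-cycle killed by f, hence by E_{r+1}-injectivity the boundary of an
   r-cycle family in the kernel of f, and subtracting that family, shifted by
   k - r columns, removes the obstruction without changing the image. *)

From HB Require Import structures.
From mathcomp Require Import all_boot all_order all_algebra zify.
Local Open Scope ring_scope.
Import GRing.Theory.
Set Implicit Arguments.

Section Transport.
Variables (R : comPzRingType) (A : int -> int -> lmodType R).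

Lemma tr_id p q (x : A p q) : tr p q x = x.
Proof. by rewrite /tr; case: eqP => // e; rewrite (eq_irrelevance e (erefl _)). Qed.

Lemma tr_ne p q p' q' (x : A p q) : (p, q) <> (p', q') -> tr p' q' x = 0.
Proof. by rewrite /tr; case: eqP. Qed.

Lemma tr_is_linear p q p' q' : linear (@tr R A p q p' q').
Proof.
move=> k x y; case: (eqVneq (p, q) (p', q')) => [[<- <-]|/eqP ne].
  by rewrite !tr_id.
by rewrite !tr_ne // scaler0 addr0.
Qed.

HB.instance Definition _ p q p' q' :=
  GRing.isLinear.Build R (A p q) (A p' q') _ (@tr R A p q p' q')
    (tr_is_linear p q p' q').

Lemma tr0 p q p' q' : tr p' q' (0 : A p q) = 0.
Proof. exact: raddf0. Qed.

Lemma tr_trl p q p' q' p'' q'' (x : A p q) :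
  (p, q) = (p', q') -> tr p'' q'' (tr p' q' x) = tr p'' q'' x.
Proof. by case=> <- <-; rewrite tr_id. Qed.

Lemma tr_trr p q p' q' p'' q'' (x : A p q) :
  (p', q') = (p'', q'') -> tr p'' q'' (tr p' q' x) = tr p'' q'' x.
Proof. by case=> <- <-; rewrite tr_id. Qed.

Lemma tr_inj p q p' q' : (p, q) = (p', q') -> injective (@tr R A p q p' q').
Proof. by case=> <- <- x y; rewrite !tr_id. Qed.

Lemma tr_eq0 p q p' q' (x : A p q) : (p, q) = (p', q') -> tr p' q' x = 0 -> x = 0.
Proof. by move=> e; rewrite -(tr0 p q p' q') => /(tr_inj e). Qed.

End Transport.

Lemma signr_addn_even (R : pzRingType) (a k : nat) :
  (-1) ^+ (a + k * 2) = (-1) ^+ a :> R.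
Proof. by rewrite exprD exprM sqrr_sign mulr1. Qed.

Lemma exchange_big_triangle (V : zmodType) m (F : nat -> nat -> V) :
  \sum_(l < m.+1) \sum_(j < l.+1) F l j =
  \sum_(j < m.+1) \sum_(i < (m - j).+1) F (j + i)%N j.
Proof.
elim: m => [|m IH]; first by rewrite !big_ord1.
rewrite big_ord_recr /= IH [in RHS]big_ord_recr /= subnn big_ord1 addn0.
rewrite [\sum_(j < m.+2) _]big_ord_recr /= addrA; congr (_ + _).
rewrite -big_split; apply: eq_bigr => j _ /=.
have jm : (j <= m)%N := ltn_ord j.
by rewrite (subSn jm) [in RHS]big_ord_recr /= addnS subnKC.
Qed.

Section Families.
Variables (R : comPzRingType) (n : option nat).

Lemma dmap_tr (A : mcx R n) i p q p' q' (x : A p q) :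
  dmap A i p' q' (tr p' q' x) = tr (p' - i%:Z) (q' + 1 - i%:Z) (dmap A i p q x).
Proof.
case: (eqVneq (p, q) (p', q')) => [[<- <-]|/eqP ne]; first by rewrite !tr_id.
rewrite tr_ne // raddf0 tr_ne //.
by case=> e1 e2; apply: ne; congr pair; lia.
Qed.

Lemma fmap_tr (A B : mcx R n) (f : mcmor R n A B) p q p' q' (x : A p q) :
  f p' q' (tr p' q' x) = tr p' q' (f p q x).
Proof.
case: (eqVneq (p, q) (p', q')) => [[<- <-]|/eqP ne]; first by rewrite !tr_id.
by rewrite !tr_ne // raddf0.
Qed.

(* A family [a] stands for the element sum_j a_j of the product totalisation
   of A; [dtot a l] is the column-(p - l) component of its total differential,
   so [cycrel k a] says that D a vanishes in its first k columns. *)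
Definition fam (A : mcx R n) (p q : int) := forall j : nat, A (p - j%:Z) (q - j%:Z).

Definition dtot (A : mcx R n) p q (a : fam A p q) : fam A p (q + 1) :=
  fun l => \sum_(j < l.+1)
       (-1) ^+ (l - j)%N *:
         tr (p - l%:Z) (q + 1 - l%:Z)
            (dmap A (l - j)%N (p - (j : nat)%:Z) (q - (j : nat)%:Z) (a j)).

Section Dtot.
Variables (A : mcx R n) (p q : int).
Implicit Types (a b : fam A p q).

Lemma dtotD a b l : dtot (fun j => a j + b j) l = dtot a l + dtot b l.
Proof. by rewrite /dtot -big_split; apply: eq_bigr => j _; rewrite !raddfD. Qed.

Lemma dtotN a l : dtot (fun j => - a j) l = - dtot a l.
Proof. by rewrite /dtot -sumrN; apply: eq_bigr => j _; rewrite !raddfN. Qed.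

Lemma dtotB a b l : dtot (fun j => a j - b j) l = dtot a l - dtot b l.
Proof. by rewrite (dtotD a (fun j => - b j)) dtotN. Qed.

Lemma dtotZ (c : R) a l : dtot (fun j => c *: a j) l = c *: dtot a l.
Proof.
rewrite /dtot scaler_sumr; apply: eq_bigr => j _.
by rewrite linearZ /= [tr _ _ _]linearZ /= !scalerA mulrC.
Qed.

Lemma eq_dtot a b l : (forall j, (j <= l)%N -> a j = b j) -> dtot a l = dtot b l.
Proof. by move=> eq_ab; apply: eq_bigr => j _; rewrite eq_ab // -ltnS. Qed.

(* The twist by (-1)^l turns the sign (-1)^(i + i') of the iterated sum into
   the sign (-1)^i of the multicomplex relations. *)
Lemma dtot_dtot a m : dtot (fun l => (-1) ^+ l *: dtot a l) m = 0.
Proof.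
pose G (l j : nat) := ((-1) ^+ (m - l) * (-1) ^+ l * (-1) ^+ (l - j)) *:
   tr (p - m%:Z) (q + 1 + 1 - m%:Z)
     (dmap A (m - l) (p - j%:Z - (l - j)%:Z) (q - j%:Z + 1 - (l - j)%:Z)
        (dmap A (l - j) (p - j%:Z) (q - j%:Z) (a j))).
have -> : dtot (fun l => (-1) ^+ l *: dtot a l) m =
          \sum_(l < m.+1) \sum_(j < l.+1) G l j.
  apply: eq_bigr => l _.
  rewrite linearZ /= raddf_sum /= [tr _ _ _]linearZ /= raddf_sum !scaler_sumr.
  apply: eq_bigr => j _.
  have lm : (l <= m)%N := ltn_ord l.
  have jl : (j <= l)%N := ltn_ord j.
  rewrite [dmap A _ _ _ (_ *: _)]linearZ /= dmap_tr [tr _ _ (_ *: _)]linearZ /=.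
  rewrite tr_trr; last by congr pair; lia.
  by rewrite !scalerA /G mulrA.
rewrite exchange_big_triangle; apply: big1 => j _.
have jm : (j <= m)%N := ltn_ord j.
have := congr1 (tr (p - m%:Z) (q + 1 + 1 - m%:Z))
                (dmap_rel R n A (m - j) (p - j%:Z) (q - j%:Z) (a j)).
rewrite raddf0 raddf_sum /= => rel0.
rewrite -[RHS](scaler0 _ ((-1) ^+ j)) -[in RHS]rel0 scaler_sumr.
apply: eq_bigr => i _.
have im : (i <= m - j)%N := ltn_ord i.
rewrite /G [tr _ _ (_ *: _)]linearZ /= tr_trr; last by congr pair; lia.
rewrite addKn subnDA scalerA; congr (_ *: _).
by rewrite -!exprD -[in RHS](signr_addn_even _ _ i); congr (_ ^+ _); lia.
Qed.

End Dtot.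

Lemma fmap0 (A B : mcx R n) (f : mcmor R n A B) p q : f p q 0 = 0.
Proof. exact: raddf0. Qed.

Lemma fmap_dtot (A B : mcx R n) (f : mcmor R n A B) p q (a : fam A p q) l :
  f _ _ (dtot a l) = dtot (fun j => f _ _ (a j)) l.
Proof.
rewrite /dtot raddf_sum /=; apply: eq_bigr => j _.
by rewrite linearZ /= fmap_tr fmap_comm.
Qed.

Lemma cycrelP (A : mcx R n) k p q (a : fam A p q) :
  cycrel R n A k p q a <-> forall l, (l < k)%N -> dtot a l = 0.
Proof. by []. Qed.

Lemma cycrelB (A : mcx R n) k p q (a b : fam A p q) :
  cycrel R n A k p q a -> cycrel R n A k p q b ->
  cycrel R n A k p q (fun j => a j - b j).
Proof.
by move=> /cycrelP Ha /cycrelP Hb; apply/cycrelP => l lk; rewrite dtotB Ha ?Hb ?subrr.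
Qed.

Lemma fmap_cycrel (A B : mcx R n) (f : mcmor R n A B) k p q (a : fam A p q) :
  cycrel R n A k p q a -> cycrel R n B k p q (fun j => f _ _ (a j)).
Proof.
by move/cycrelP=> Ha; apply/cycrelP => l lk; rewrite -fmap_dtot Ha // fmap0.
Qed.

Section Columns.
Variable A : mcx R n.

Definition drop_fam P Q m P' Q' (v : fam A P Q) : fam A P' Q' :=
  fun j => tr (P' - j%:Z) (Q' - j%:Z) (v (j + m)%N).

Definition pad_fam P' Q' m P Q (e : fam A P' Q') : fam A P Q :=
  fun j => if (m <= j)%N then tr (P - j%:Z) (Q - j%:Z) (e (j - m)%N) else 0.

Lemma dtotE P Q (v : fam A P Q) l :
  dtot v l = \sum_(0 <= j < l.+1)
       (-1) ^+ (l - j)%N *: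
         tr (P - l%:Z) (Q + 1 - l%:Z) (dmap A (l - j)%N (P - j%:Z) (Q - j%:Z) (v j)).
Proof. by rewrite big_mkord. Qed.

Lemma dtot_drop_fam P Q m P' Q' (v : fam A P Q) l :
  P' = P - m%:Z -> Q' = Q - m%:Z -> (forall j, (j < m)%N -> v j = 0) ->
  dtot (drop_fam m P' Q' v) l = tr (P' - l%:Z) (Q' + 1 - l%:Z) (dtot v (l + m)%N).
Proof.
move=> -> -> v0.
rewrite !dtotE raddf_sum /= [in RHS](big_cat_nat (n := m)) //=; last by lia.
rewrite [X in _ = X + _]big1_seq ?add0r; last first.
  move=> j /andP[_]; rewrite mem_index_iota => /andP[_ jm].
  by rewrite v0 // !raddf0.
rewrite (big_addn 0 _ m) -addSn addnK.
apply: eq_big_nat => j /andP[_ jl].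
rewrite /drop_fam dmap_tr tr_trl; last by congr pair; lia.
rewrite linearZ /= tr_trl; last by congr pair; lia.
by rewrite subnDr.
Qed.

Lemma dtot_pad_fam P' Q' m P Q (e : fam A P' Q') l :
  P' = P - m%:Z -> Q' = Q - m%:Z ->
  dtot (pad_fam m P Q e) l =
    if (m <= l)%N then tr (P - l%:Z) (Q + 1 - l%:Z) (dtot e (l - m)%N) else 0.
Proof.
move=> eP eQ; case: leqP => ml; last first.
  apply: big1 => j _; rewrite /pad_fam.
  have jl : (j <= l)%N := ltn_ord j.
  have -> : (m <= j)%N = false by apply/negbTE; rewrite -ltnNge; apply: leq_ltn_trans ml.
  by rewrite !raddf0.
rewrite !dtotE raddf_sum /= [in LHS](big_cat_nat (n := m)) //=; last by lia.
rewrite [X in X + _ = _]big1_seq ?add0r; last first.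
  move=> j /andP[_]; rewrite mem_index_iota => /andP[_ jm].
  by rewrite /pad_fam leqNgt jm /= !raddf0.
rewrite (big_addn 0 _ m) (subSn ml).
apply: eq_big_nat => j /andP[_ jl].
rewrite /pad_fam leq_addl addnK dmap_tr tr_trl; last by congr pair; lia.
rewrite linearZ /= tr_trl; last by congr pair; lia.
by rewrite -subnDA addnC.
Qed.

End Columns.

Section Pages.
Variable A : mcx R n.

Lemma Zr0 p q (x : A p q) : Zr R n A 0 p q x.
Proof.
exists (fun j : nat => tr (p - j%:Z) (q - j%:Z) x); split => //.
by rewrite tr_trl ?tr_id //; congr pair; lia.
Qed.

Lemma Br0_eq0 p q (x : A p q) : Br R n A 0 p q x -> x = 0.
Proof. by case=> b [-> _]; rewrite big_ord0. Qed.

Lemma Br0 r p q : Br R n A r p q 0.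
Proof.
exists (fun _ => 0); split.
  by symmetry; apply: big1 => i _; rewrite !raddf0.
by move=> l _; apply: big1 => i _; rewrite !raddf0.
Qed.

Lemma sum_dmap_rev P Q (b : fam A P Q) l X Y :
  \sum_(i < l.+1) (-1) ^+ (i : nat) *: tr X Y (dmap A i _ _ (b (l - i)%N)) =
  tr X Y (dtot b l).
Proof.
rewrite /dtot raddf_sum /= [RHS](reindex_inj rev_ord_inj) /=.
apply: eq_bigr => i _.
have il : (i <= l)%N := ltn_ord i.
rewrite subSS linearZ /= tr_trl; last by congr pair; lia.
by rewrite subKn.
Qed.

Lemma BrS_dtot r p q (x : A p q) : Br R n A r.+1 p q x ->
  exists b : fam A (p + r.+1%:Z - 1) (q + r.+1%:Z - 2),
    cycrel R n A r _ _ b /\ x = tr p q (dtot b r).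
Proof.
case=> b [-> Hb]; exists b; split.
  move=> l lr; have := Hb l lr; rewrite sum_dmap_rev; apply: tr_eq0.
  by congr pair; lia.
by rewrite -sum_dmap_rev; apply: eq_bigr => i _; rewrite subSS subn0.
Qed.

(* Witness: the tail j >= k of the twisted boundary (-1)^(k + j) (D b)_j, a
   cycle family by [dtot_dtot]. *)
Lemma Zr_dtot_cycle k r P Q P' Q' (b : fam A P Q) :
  P' = P - k%:Z -> Q' = Q + 1 - k%:Z -> cycrel R n A k P Q b ->
  Zr R n A r P' Q' (tr P' Q' (dtot b k)).
Proof.
move=> eP eQ /cycrelP Hb.
exists (drop_fam k P' Q' (fun j => ((-1) ^+ k * (-1) ^+ j) *: dtot b j)); split.
  apply/cycrelP => l _.
  rewrite dtot_drop_fam //; last by move=> j jk; rewrite Hb // scaler0.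
  rewrite (eq_dtot _ (fun j => (-1) ^+ k *: ((-1) ^+ j *: dtot b j))).
    by rewrite dtotZ dtot_dtot scaler0 raddf0.
  by move=> j _; rewrite scalerA.
rewrite /drop_fam tr_trl; last by congr pair; lia.
by rewrite /= -expr2 sqrr_sign scale1r.
Qed.

End Pages.

End Families.

Section Lifting.
Variables (R : comPzRingType) (n : option nat) (A B : mcx R n) (f : mcmor R n A B).

(* Lifting against ZW_k(p, q) for all p, q; the lift is required at every
   index j, not only at the generators j < max(k, 1). *)
Definition rlp_ZW k := forall p q (y : fam B p q), cycrel R n B k p q y ->
  exists x : fam A p q, cycrel R n A k p q x /\ forall j, f _ _ (x j) = y j.

Lemma fmap_surj : E_surj R n A B f 0 -> forall p q (y : B p q), exists x, f p q x = y.
Proof.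
move=> ES p q y; have [x [_ /Br0_eq0 fxy]] := ES p q y (Zr0 B p q y).
by exists x; apply/eqP; rewrite -subr_eq0 fxy.
Qed.

Lemma rlp_ZW0 : E_surj R n A B f 0 -> rlp_ZW 0.
Proof.
move=> ES p q y _.
have lift_y j : exists x, f _ _ x == y j.
  by have [x <-] := fmap_surj ES _ _ (y j); exists x.
by exists (fun j => xchoose (lift_y j)); split => // j; exact/eqP/(xchooseP (lift_y j)).
Qed.

Lemma lift_cycle_at0 k : E_surj R n A B f k.+1 -> rlp_ZW k ->
  forall p q (y : fam B p q), cycrel R n B k.+1 p q y ->
  exists x : fam A p q, cycrel R n A k.+1 p q x /\ f _ _ (x 0%N) = y 0%N.
Proof.
move=> ES lift p q y Hy.
have Zy : Zr R n B k.+1 p q (tr p q (y 0%N)) by exists y.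
have [x0 [[a [Ha ax0]] /BrS_dtot [b [Hb fx0]]]] := ES p q _ Zy.
have [b' [Hb' fb']] := lift _ _ b Hb.
have [w [Hw w0]] : Zr R n A k.+1 p q (tr p q (dtot b' k)).
  by apply: Zr_dtot_cycle Hb'; lia.
exists (fun j => a j - w j); split; first exact (cycrelB Ha Hw).
have e0 : (p - 0%:Z, q - 0%:Z) = (p, q) by congr pair; lia.
apply: (@tr_inj _ B _ _ _ _ e0).
rewrite !raddfB /= -!fmap_tr ax0 w0 fmap_tr fmap_dtot.
by rewrite (eq_dtot _ b) -?fx0 ?opprB 1?addrC ?subrK // => j _; rewrite fb'.
Qed.

Lemma rlp_ZW_extend k : rlp_ZW k ->
  forall p q (y : fam B p q) (x : fam A p q),
  cycrel R n B k.+1 p q y -> cycrel R n A k.+1 p q x -> f _ _ (x 0%N) = y 0%N ->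
  exists x' : fam A p q, cycrel R n A k.+1 p q x' /\ forall j, f _ _ (x' j) = y j.
Proof.
move=> lift p q y x Hy Hx fx0.
pose z : fam B p q := fun j => y j - f _ _ (x j).
have /cycrelP Hz : cycrel R n B k.+1 p q z := cycrelB Hy (fmap_cycrel f Hx).
move/cycrelP in Hx.
pose z1 := drop_fam 1 (p - 1) (q - 1) z.
have Hz1 : cycrel R n B k _ _ z1.
  apply/cycrelP => l lk; rewrite dtot_drop_fam //; last first.
    by case=> // _; rewrite /z fx0 subrr.
  by rewrite Hz ?tr0 // addn1.
have [z' [/cycrelP Hz' fz']] := lift _ _ z1 Hz1.
exists (fun j => x j + pad_fam 1 p q z' j); split.
  apply/cycrelP => l lk; rewrite dtotD Hx // add0r dtot_pad_fam //.
  by case: ifP => // l1; rewrite Hz' ?raddf0 //; lia.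
case=> [|j]; first by rewrite raddfD /pad_fam /= fmap0 addr0.
rewrite raddfD /pad_fam /= subn1 /= fmap_tr fz' /z1 /drop_fam.
rewrite tr_trl; last by congr pair; lia.
by rewrite addn1 tr_id /z [LHS]addrC subrK.
Qed.

Lemma rlp_ZWS_surj k : E_surj R n A B f k.+1 -> rlp_ZW k -> rlp_ZW k.+1.
Proof.
move=> ES lift p q y Hy.
have [x [Hx fx0]] := lift_cycle_at0 ES lift Hy.
exact (rlp_ZW_extend lift Hy Hx fx0).
Qed.

(* Subtracting from the witness b of E_{r+1}-injectivity a lift of the
   (r+1)-cycle family f b makes the family itself killed by f. *)
Lemma Zr_ker_boundary r : E_inj R n A B f r.+1 -> rlp_ZW r.+1 ->
  forall P Q (c : A P Q), Zr R n A r.+1 P Q c -> f _ _ c = 0 ->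
  exists e : fam A (P + r.+1%:Z - 1) (Q + r.+1%:Z - 2),
    [/\ cycrel R n A r _ _ e, forall j, f _ _ (e j) = 0 & tr P Q (dtot e r) = c].
Proof.
move=> EI lift P Q c Zc fc0.
have Bfc : Br R n B r.+1 P Q (f _ _ c) by rewrite fc0; exact: Br0.
have [b [/cycrelP Hb cb]] := BrS_dtot (EI _ _ _ Zc Bfc).
have Hfb : cycrel R n B r.+1 _ _ (fun j => f _ _ (b j)).
  apply/cycrelP => l; rewrite ltnS leq_eqVlt -fmap_dtot => /orP[/eqP -> | lr].
    have : f _ _ (tr P Q (dtot b r)) = 0 by rewrite -cb.
    by rewrite fmap_tr; apply: tr_eq0; congr pair; lia.
  by rewrite Hb // raddf0.
have [b'' [/cycrelP Hb'' fb'']] := lift _ _ _ Hfb.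
exists (fun j => b j - b'' j); split.
- by apply/cycrelP => l lr; rewrite dtotB Hb // Hb'' ?subrr // ltnW.
- by move=> j; rewrite raddfB /= fb'' subrr.
by rewrite dtotB Hb'' // subr0.
Qed.

Lemma rlp_ZWS_inj r k : E_inj R n A B f r.+1 -> (r < k)%N ->
  rlp_ZW k -> rlp_ZW r.+1 -> rlp_ZW k.+1.
Proof.
move=> EI rk lift liftr p q y /cycrelP Hy.
have [x [Hx fx]] := lift _ _ y (fun l lk => Hy l (ltnW lk)).
have fc0 : f _ _ (dtot x k) = 0.
  by rewrite fmap_dtot (eq_dtot _ y) ?Hy // => j _; exact: fx.
have Zc : Zr R n A r.+1 _ _ (dtot x k).
  by rewrite -[dtot x k]tr_id; exact: Zr_dtot_cycle Hx.
have [e [/cycrelP He fe ec]] := Zr_ker_boundary EI liftr Zc fc0.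
exists (fun j => x j - pad_fam (k - r) p q e j); split.
  apply/cycrelP => l; rewrite ltnS leq_eqVlt dtotB dtot_pad_fam; [|lia|lia].
  move/cycrelP: Hx => Hx /orP[/eqP -> | lk].
    by rewrite leq_subr subKn ?(ltnW rk) // ec subrr.
  by rewrite Hx //; case: ifP => kl; rewrite ?He ?tr0 ?subrr //; lia.
move=> j; rewrite raddfB /= fx /pad_fam; case: ifP => _; last by rewrite fmap0 subr0.
by rewrite fmap_tr fe tr0 subr0.
Qed.

Lemma rlp_ZW_of_fibration r : Er_qiso R n A B f r -> r_fibration R n A B f r ->
  forall k, rlp_ZW k.
Proof.
move=> [EI ESr] fib.
have ES i : (i <= r.+1)%N -> E_surj R n A B f i.
  by rewrite leq_eqVlt => /orP[/eqP -> // | ]; exact: fib.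
elim/ltn_ind => -[|k] IH; first exact/rlp_ZW0/ES.
have liftk := IH k (ltnSn k).
case: (leqP k r) => [kr | rk]; first exact (rlp_ZWS_surj (ES k.+1 kr) liftk).
exact (rlp_ZWS_inj EI rk liftk (IH r.+1 rk)).
Qed.

End Lifting.

Theorem mainTheorem18 (R : comPzRingType) (n : option nat)
    (hn : if n is Some m then (2 <= m)%N else true)
    (A B : mcx R n) (f : mcmor R n A B) (r s : nat) (p q : int) :
  Er_qiso R n A B f r -> r_fibration R n A B f r ->
  forall g : forall j : nat, B (p - j%:Z) (q - j%:Z),
    ZW_hom R n B s p q g ->
    exists h : forall j : nat, A (p - j%:Z) (q - j%:Z),
      ZW_hom R n A s p q h /\ lifts R n A B f s p q h g.
Proof.
move=> qiso fib g Hg.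
have [h [Hh fh]] := rlp_ZW_of_fibration qiso fib Hg.
by exists h; split => // j _; exact: fh.
Qed.
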